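(* Let $({\cal X},+)$ be a countable commutative group with at least two elements, let ${\bold H}(i)={\cal X}$ for all $i\in\omega$ (so ${\cal X}^\omega=\prod_{i\in\omega}{\bold H}(i)$ is a commutative group under coordinatewise addition), and let $(K,\Sigma,\Sigma^\bot)$ be a semi--creating triple for ${\bold H}$. (1) If $(K,\Sigma,\Sigma^\bot)$ is directly $+$--invariant, then the ideal $\mathbb{I}_\infty(K,\Sigma,\Sigma^\bot)$ is translation--invariant, i.e. $A+x\in\mathbb{I}_\infty(K,\Sigma,\Sigma^\bot)$ whenever $A\in\mathbb{I}_\infty(K,\Sigma,\Sigma^\bot)$ and $x\in{\cal X}^\omega$. (2) If $(K,\Sigma,\Sigma^\bot)$ is directly permutation--invariant, then $\mathbb{I}_\infty(K,\Sigma,\Sigma^\bot)$ is permutation--invariant, i.e. for every permutation $\pi$ of $\omega$ and every $A\in\mathbb{I}_\infty(K,\Sigma,\Sigma^\bot)$, the set $\{x\in{\cal X}^\omega: x\circ\pi\in A\}$ belongs to $\mathbb{I}_\infty(K,\Sigma,\Sigma^\bot)$.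
   Context: Semi--creatures, semi--creating triples, the forcing $\mathbb{Q}^+_\infty(K,\Sigma,\Sigma^\bot)$, $\dot W$ and the ideal $\mathbb{I}_\infty(K,\Sigma,\Sigma^\bot)$ are as follows. A semi--creature for ${\bold H}$ is a quadruple $t=(\mathbf{dom}[t],\mathbf{sval}[t],\mathbf{nor}[t],\mathbf{dis}[t])$ with $\mathbf{dom}[t]$ a non-empty finite subset of $\omega$, $\emptyset\neq\mathbf{sval}[t]\subseteq\prod_{i\in\mathbf{dom}[t]}{\bold H}(i)$, $\mathbf{nor}[t]\in[0,\infty)\cup\{\infty\}$, $\mathbf{dis}[t]$ hereditarily countable, and $\mathbf{sval}[t]=\prod_{i\in\mathbf{dom}[t]}{\bold H}(i)$ iff $\mathbf{nor}[t]=\infty$. A semi--composition operation $\Sigma$ on a set $K$ of semi--creatures maps finite subsets of $K$ to subsets of $K$ with: (a) if $s\in\Sigma(\mathcal S_s)$ for all $s\in\mathcal S$ then $\Sigma(\mathcal S)\subseteq\Sigma(\bigcup_s\mathcal S_s)$; (b) $t\in\Sigma(\{t\})$, $\Sigma(\emptyset)=\emptyset$; (c) if $t\in\Sigma(\mathcal S)$ then $\mathbf{dom}[t]=\bigcup_{s\in\mathcal S}\mathbf{dom}[s]$, $v\restriction\mathbf{dom}[s]\in\mathbf{sval}[s]$ for $v\in\mathbf{sval}[t]$, $s\in\mathcal S$, and distinct members of $\mathcal S$ have disjoint domains. A semi--decomposition operation $\Sigma^\bot$ assigns to each $t\in K$ a non-empty family of finite subsets of $K$ with: (a) if $\{s_0,\dots,s_k\}\in\Sigma^\bot(t)$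 and $\mathcal S_i\in\Sigma^\bot(s_i)$ then $\bigcup_i\mathcal S_i\in\Sigma^\bot(t)$; (b) $\{t\}\in\Sigma^\bot(t)$; (c) if $\mathcal S\in\Sigma^\bot(t)$ then $\mathbf{dom}[t]=\bigcup_{s\in\mathcal S}\mathbf{dom}[s]$ and each $v\in\prod_{i\in\mathbf{dom}[t]}{\bold H}(i)$ with $v\restriction\mathbf{dom}[s]\in\mathbf{sval}[s]$ for all $s\in\mathcal S$ is in $\mathbf{sval}[t]$. Conditions of $\mathbb{Q}^+_\infty(K,\Sigma,\Sigma^\bot)$ are sequences $p=(w^p,t^p_0,t^p_1,\dots)$ with $w^p$ a finite function, $w^p(i)\in{\bold H}(i)$, $t^p_i\in K$, $\mathrm{dom}(w^p)$ and the $\mathbf{dom}[t^p_i]$ partitioning $\omega$, $\mathbf{nor}[t^p_i]\neq\infty$ and $\mathbf{nor}[t^p_i]\to\infty$. $p\leq q$ iff $q$ arises from $p$ by finitely many operations: deciding the value (for a finite $A\subseteq\omega$, extend $w$ to $w^*$ with domain $\mathrm{dom}(w)\cup\bigcup_{i\in A}\mathbf{dom}[t_i]$, $w^*\restriction\mathbf{dom}[t_i]\in\mathbf{sval}[t_i]$, and keep the $t_i$, $i\notin A$); applying $\Sigma$ (replace by $t^*_i\in\Sigma(\{t_j:j\in A_i\})$ for pairwise disjoint finite $A_i$); applying $\Sigma^\bot$ (replace $t_i$ by the members of some element of $\Sigma^\bot(t_i)$, using disjoint non-empty index sets). $\dot W$ names $\bigcup\{w^p:p\in\text{generic filter}\}$;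 $\mathbb{I}_\infty(K,\Sigma,\Sigma^\bot)$ is the ideal on $\prod_i{\bold H}(i)$ (product of discrete topologies) generated by the Borel sets $B$ with $\Vdash\dot W\notin B$. $(K,\Sigma,\Sigma^\bot)$ is directly $+$--invariant if for each $t\in K$ and $v\in{\cal X}^{\mathbf{dom}[t]}$ there is a unique $s=t+v\in K$ with $\mathbf{dom}[s]=\mathbf{dom}[t]$, $\mathbf{nor}[s]=\mathbf{nor}[t]$, $\mathbf{sval}[s]=\{w+v:w\in\mathbf{sval}[t]\}$, and moreover $\Sigma^\bot(t+v)=\{\{s+(v\restriction\mathbf{dom}[s]):s\in\mathcal S\}:\mathcal S\in\Sigma^\bot(t)\}$ and $\Sigma(\{t+(v\restriction\mathbf{dom}[t]):t\in\mathcal S\})=\{s+v:s\in\Sigma(\mathcal S)\}$ for non-empty finite $\mathcal S\subseteq K$ and $v:\bigcup_{s\in\mathcal S}\mathbf{dom}[s]\to{\cal X}$. It is directly permutation--invariant if for each $t\in K$ and injection $\pi:X\to\omega$ with $\mathbf{dom}[t]\subseteq X\subseteq\omega$ there is a unique $s=\pi(t)\in K$ with $\mathbf{dom}[s]=\pi[\mathbf{dom}[t]]$, $\mathbf{nor}[s]=\mathbf{nor}[t]$, $\mathbf{sval}[s]=\{w\circ\pi^{-1}:w\in\mathbf{sval}[t]\}$, and moreover $\Sigma^\bot(\pi(t))=\{\{\pi(s):s\in\mathcal S\}:\mathcal S\in\Sigma^\bot(t)\}$ and $\Sigma(\{\pi(t):t\in\mathcal S\})=\{\pi(s):s\in\Sigma(\mathcal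 S)\}$ for injections $\pi:\omega\to\omega$. *)

From HB Require Import structures.
From mathcomp Require Import all_boot all_algebra.
From mathcomp Require Import finmap.
From Stdlib Require Reals.
From Stdlib Require Import Relations List.
Notation R := Reals.Rdefinitions.R.
Notation Rle := Reals.Rdefinitions.Rle.
Set Implicit Arguments. Unset Strict Implicit. Unset Printing Implicit Defensive.
Import GRing.Theory.
Local Open Scope fset_scope.

Section SemiCreatures.
Variable X : zmodType.   (* H(i) = X for all i *)
Variable D : Type.

(* finite partial functions omega -> X; the domain is {i | v i <> None} *)
Definition pfun := nat -> option X.

(* v is an element of prod_{i in A} H(i) *)
Definition full_on (A : {fset nat}) (v : pfun) : Prop :=
  forall i, v i <> None <-> i \in A.

Definition restr (v : pfun) (A : {fset nat}) : pfun :=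
  fun i => if i \in A then v i else None.

Definition padd (w v : pfun) : pfun :=
  fun i => match w i, v i with Some a, Some b => Some (a + b)%R | _, _ => None end.

(* quadruples (dom, sval, nor, dis); nor = None encodes infinity *)
Record creature := Creature {
  cdom : {fset nat};
  csval : pfun -> Prop;
  cnor : option R;
  cdis : D }.

Definition semi_creature (t : creature) : Prop :=
  cdom t != fset0 /\
  (exists v, csval t v) /\
  (forall v, csval t v -> full_on (cdom t) v) /\
  (forall r, cnor t = Some r -> Rle Reals.Rdefinitions.R0 r) /\
  ((forall v, full_on (cdom t) v -> csval t v) <-> cnor t = None).

Definition cset := creature -> Prop.

Definition cfinite (S : cset) : Prop :=
  exists l : list creature, forall s, S s <-> In s l.

Definition csingle (t : creature) : cset := fun s => s = t.
Definition cempty : cset := fun _ => False.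
Definition bigU (S : cset) (F : creature -> cset) : cset :=
  fun x => exists s, S s /\ F s x.
Definition csub (S T : cset) : Prop := forall s, S s -> T s.

Variable K : cset.

Definition semi_composition (Sig : cset -> cset) : Prop :=
  (forall S, cfinite S -> csub S K -> csub (Sig S) K) /\
  (forall (S : cset) (F : creature -> cset), cfinite S -> csub S K ->
     (forall s, S s -> cfinite (F s) /\ csub (F s) K /\ Sig (F s) s) ->
     csub (Sig S) (Sig (bigU S F))) /\
  (forall t, K t -> Sig (csingle t) t) /\
  (forall t, ~ Sig cempty t) /\
  (forall S, cfinite S -> csub S K -> forall t, Sig S t ->
     (forall i, i \in cdom t <-> exists s, S s /\ i \in cdom s) /\
     (forall v, csval t v -> forall s, S s -> csval s (restr v (cdom s))) /\
     (forall s s', S s -> S s' -> s <> s' ->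
        forall i, i \in cdom s -> i \in cdom s' -> False)).

Definition semi_decomposition (SigB : creature -> cset -> Prop) : Prop :=
  (forall t, K t -> exists S, SigB t S) /\
  (forall t S, K t -> SigB t S -> cfinite S /\ csub S K) /\
  (forall t S (F : creature -> cset), K t -> SigB t S ->
     (forall s, S s -> SigB s (F s)) -> SigB t (bigU S F)) /\
  (forall t, K t -> SigB t (csingle t)) /\
  (forall t S, K t -> SigB t S ->
     (forall i, i \in cdom t <-> exists s, S s /\ i \in cdom s) /\
     (forall v, full_on (cdom t) v ->
        (forall s, S s -> csval s (restr v (cdom s))) -> csval t v)).

Definition semi_creating_triple (Sig : cset -> cset) (SigB : creature -> cset -> Prop) :=
  (forall t, K t -> semi_creature t) /\ semi_composition Sig /\ semi_decomposition SigB.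

Record cond := Cond { cw : pfun; ct : nat -> creature }.

Definition is_cond (p : cond) : Prop :=
  (exists A : {fset nat}, full_on A (cw p)) /\
  (forall i, K (ct p i)) /\
  (forall j, cw p j <> None \/ exists i, j \in cdom (ct p i)) /\
  (forall i j, cw p j <> None -> j \in cdom (ct p i) -> False) /\
  (forall i i' j, i <> i' -> j \in cdom (ct p i) -> j \in cdom (ct p i') -> False) /\
  (forall i, cnor (ct p i) <> None) /\
  (forall M : R, exists N, forall i, N <= i -> forall r, cnor (ct p i) = Some r -> Rle M r).

Definition pextends (w w' : pfun) : Prop := forall i a, w i = Some a -> w' i = Some a.

Definition step_decide (p q : cond) : Prop :=
  exists A : {fset nat},
    (forall j, cw q j <> None <-> (cw p j <> None \/ exists i, i \in A /\ j \in cdom (ct p i))) /\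
    pextends (cw p) (cw q) /\
    (forall i, i \in A -> csval (ct p i) (restr (cw q) (cdom (ct p i)))) /\
    exists f : nat -> nat, (forall k, f k < f k.+1) /\
      (forall i, i \notin A <-> exists k, f k = i) /\
      (forall k, ct q k = ct p (f k)).

Definition step_sigma (Sig : cset -> cset) (p q : cond) : Prop :=
  cw q = cw p /\ exists A : nat -> {fset nat},
    (forall i i' j, i <> i' -> j \in A i -> j \in A i' -> False) /\
    (forall j, exists i, j \in A i) /\
    (forall i, Sig (fun s => exists j, j \in A i /\ s = ct p j) (ct q i)).

Definition step_sigmaB (SigB : creature -> cset -> Prop) (p q : cond) : Prop :=
  cw q = cw p /\ exists B : nat -> {fset nat},
    (forall i i' j, i <> i' -> j \in B i -> j \in B i' -> False) /\
    (forall j, exists i, j \in B i) /\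
    (forall i, B i != fset0) /\
    (forall i, SigB (ct p i) (fun s => exists j, j \in B i /\ s = ct q j)).

Variable Sig : cset -> cset.
Variable SigB : creature -> cset -> Prop.

Definition qstep (p q : cond) : Prop :=
  is_cond p /\ is_cond q /\
  (step_decide p q \/ step_sigma Sig p q \/ step_sigmaB SigB p q).

(* p <= q : q is stronger than p *)
Definition qle (p q : cond) : Prop :=
  is_cond p /\ is_cond q /\ clos_refl_trans cond qstep p q.

Definition dense_below (p : cond) (P : cond -> Prop) : Prop :=
  forall q, qle p q -> exists r, qle q r /\ P r.

(* Borel codes for subsets of X^omega (product of discrete topologies) *)
Inductive bcode :=
  | BAt : nat -> X -> bcode
  | BCompl : bcode -> bcode
  | BUnion : (nat -> bcode) -> bcode.

Fixpoint bset (c : bcode) : (nat -> X) -> Prop :=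
  match c with
  | BAt i a => fun x => x i = a
  | BCompl c' => fun x => ~ bset c' x
  | BUnion f => fun x => exists n, bset (f n) x
  end.

(* the forcing relation  p ||- "W in [[c]]"  where W = U { w^p : p in G } *)
Fixpoint forces (p : cond) (c : bcode) : Prop :=
  match c with
  | BAt i a => dense_below p (fun q => cw q i = Some a)
  | BCompl c' => forall q, qle p q -> ~ forces q c'
  | BUnion f => dense_below p (fun q => exists n, forces q (f n))
  end.

Definition forced_out (c : bcode) : Prop :=
  forall p, is_cond p -> forces p (BCompl c).

(* the ideal I_infty(K,Sig,SigB): generated by Borel B with ||- W \notin B *)
Definition in_ideal (A : (nat -> X) -> Prop) : Prop :=
  exists l : list bcode, (forall c, In c l -> forced_out c) /\
    forall x, A x -> exists c, In c l /\ bset c x.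

Definition plus_invariant : Prop :=
  exists plus : creature -> pfun -> creature,
    (forall t v, K t -> full_on (cdom t) v ->
       K (plus t v) /\ cdom (plus t v) = cdom t /\ cnor (plus t v) = cnor t /\
       (forall u, csval (plus t v) u <-> exists w, csval t w /\ u = padd w v) /\
       (forall s, K s -> cdom s = cdom t -> cnor s = cnor t ->
          (forall u, csval s u <-> exists w, csval t w /\ u = padd w v) -> s = plus t v)) /\
    (forall t v, K t -> full_on (cdom t) v -> forall S',
       SigB (plus t v) S' <->
       exists S, SigB t S /\ S' = (fun s' => exists s, S s /\ s' = plus s (restr v (cdom s)))) /\
    (forall S v, cfinite S -> csub S K -> (exists s, S s) ->
       (forall i, v i <> None <-> exists s, S s /\ i \in cdom s) ->
       forall t', Sig (fun s' => exists s, S s /\ s' = plus s (restr v (cdom s))) t' <->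
                  exists s, Sig S s /\ t' = plus s v).

(* u = w o pi^{-1}, for w with domain A *)
Definition pcomp_inv (pi : nat -> nat) (A : {fset nat}) (w u : pfun) : Prop :=
  (forall i, i \in A -> u (pi i) = w i) /\
  (forall j, u j <> None -> exists i, i \in A /\ pi i = j).

Definition perm_invariant : Prop :=
  exists act : (nat -> nat) -> creature -> creature,
    (forall t (Xs : nat -> Prop) (pi : nat -> nat), K t ->
       (forall i, i \in cdom t -> Xs i) ->
       (forall i j, Xs i -> Xs j -> pi i = pi j -> i = j) ->
       K (act pi t) /\
       (forall j, j \in cdom (act pi t) <-> exists i, i \in cdom t /\ pi i = j) /\
       cnor (act pi t) = cnor t /\
       (forall u, csval (act pi t) u <-> exists w, csval t w /\ pcomp_inv pi (cdom t) w u) /\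
       (forall s, K s ->
          (forall j, j \in cdom s <-> exists i, i \in cdom t /\ pi i = j) ->
          cnor s = cnor t ->
          (forall u, csval s u <-> exists w, csval t w /\ pcomp_inv pi (cdom t) w u) ->
          s = act pi t)) /\
    (forall pi : nat -> nat, injective pi ->
       (forall t, K t -> forall S',
          SigB (act pi t) S' <->
          exists S, SigB t S /\ S' = (fun s' => exists s, S s /\ s' = act pi s)) /\
       (forall S, cfinite S -> csub S K -> forall t',
          Sig (fun s' => exists s, S s /\ s' = act pi s) t' <->
          exists s, Sig S s /\ t' = act pi s)).

End SemiCreatures.

(* Translation by x and the permutation of coordinates by pi are both
   coordinate transformations of X^omega of the form y (sigma i) = h i (a i),
   with sigma a bijection of omega and every h i a bijection of X.  Direct
   invariance of the triple yields a map F on creatures realising such a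
   transformation and commuting with Sig and SigB; applied to every creature
   of a condition (and to its stem) it is an automorphism of the forcing that
   moves the generic real W by the same transformation.  Automorphisms
   preserve the forcing relation, so a Borel code forced to miss W is sent to
   the transformed code, which is again forced to miss W: generators of the
   ideal go to generators. *)

From HB Require Import structures.
From mathcomp Require Import all_boot all_algebra.
From mathcomp Require Import finmap.
From Stdlib Require Import Relations List.
From Stdlib Require Import FunctionalExtensionality PropExtensionality Classical.
Set Implicit Arguments. Unset Strict Implicit. Unset Printing Implicit Defensive.
Local Open Scope fset_scope.
Import GRing.Theory.

Lemma In_mem (T : eqType) (x : T) (s : list T) : List.In x s <-> x \in s.
Proof.
elim: s => [|y s IHs] //; rewrite seq.in_cons.
by split=> [[->|/IHs->]|/orP[/eqP->|/IHs]]; rewrite ?eqxx ?orbT //; [left|right].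
Qed.

Section Forcing.
Variables (X : zmodType) (D : Type) (K : cset X D) (Sig : cset X D -> cset X D)
  (SigB : creature X D -> cset X D -> Prop).
Local Notation qle := (qle K Sig SigB).
Local Notation forces := (forces K Sig SigB).
Local Notation dense_below := (dense_below K Sig SigB).
Local Notation forced_out := (forced_out K Sig SigB).
Local Notation in_ideal := (in_ideal K Sig SigB).

Lemma qle_cond p q : qle p q -> is_cond K q.
Proof. by case=> _ []. Qed.

Lemma qle_refl p : is_cond K p -> qle p p.
Proof. by move=> Hp; split; [|split=> //; apply: rt_refl]. Qed.

Lemma qle_homo (Phi : cond X D -> cond X D) :
    (forall p, is_cond K p -> is_cond K (Phi p)) ->
    (forall p q, qstep K Sig SigB p q -> qstep K Sig SigB (Phi p) (Phi q)) ->
  forall p q, qle p q -> qle (Phi p) (Phi q).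
Proof.
move=> Phi_cond Phi_step p q [Hp [Hq pq]]; split; [|split]; try exact: Phi_cond.
elim: pq {Hp Hq} => [r s rs|r|r s u _ rs _ su].
- by apply: rt_step; apply: Phi_step.
- exact: rt_refl.
- exact: rt_trans rs su.
Qed.

Lemma in_ideal_sub (A B : (nat -> X) -> Prop) :
  (forall x, B x -> A x) -> in_ideal A -> in_ideal B.
Proof. by move=> BA [l [forced cover]]; exists l; split=> // x /BA /cover. Qed.

(* [Phi] is an automorphism of the forcing order with inverse [Psi]; [cw_Phi]
   says that it moves the generic real by [W (sigma i) = h i (W i)]. *)
Section Symmetry.
Variables (Phi Psi : cond X D -> cond X D) (sigma : nat -> nat) (h : nat -> X -> X).
Hypothesis Phi_qle : forall p q, qle p q -> qle (Phi p) (Phi q).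
Hypothesis Psi_qle : forall p q, qle p q -> qle (Psi p) (Psi q).
Hypothesis PhiK : forall p, is_cond K p -> Psi (Phi p) = p.
Hypothesis PsiK : forall p, is_cond K p -> Phi (Psi p) = p.
Hypothesis cw_Phi : forall q i a, cw (Phi q) (sigma i) = Some (h i a) <-> cw q i = Some a.
Hypothesis h_inj : forall i, injective (h i).

Fixpoint bcode_map (c : bcode X) : bcode X :=
  match c with
  | BAt i a => BAt (sigma i) (h i a)
  | BCompl c' => BCompl (bcode_map c')
  | BUnion f => BUnion (fun n => bcode_map (f n))
  end.

Lemma Psi_cond p : is_cond K p -> is_cond K (Psi p).
Proof. by move/qle_refl/Psi_qle/qle_cond. Qed.

Lemma dense_below_Phi (P P' : cond X D -> Prop) p : is_cond K p ->
    (forall r, is_cond K r -> P r <-> P' (Phi r)) ->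
  dense_below p P <-> dense_below (Phi p) P'.
Proof.
move=> Hp PP'; split=> dense q pq.
- have Hq := qle_cond pq.
  have := Psi_qle pq; rewrite PhiK // => /dense [r [qr Pr]].
  exists (Phi r); split; last exact/(PP' _ (qle_cond qr)).
  by rewrite -(PsiK Hq); apply: Phi_qle.
- have [r [qr P'r]] := dense _ (Phi_qle pq).
  have Hr := qle_cond qr.
  exists (Psi r); split; last by apply/(PP' _ (Psi_cond Hr)); rewrite PsiK.
  by have := Psi_qle qr; rewrite PhiK //; apply: qle_cond pq.
Qed.

Lemma forces_bcode_map c p : is_cond K p -> forces p c <-> forces (Phi p) (bcode_map c).
Proof.
elim: c p => [i a|c IHc|f IHf] p Hp /=.
- by apply: dense_below_Phi => // r _; rewrite cw_Phi.
- split=> notc q pq.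
  + have Hq := qle_cond pq.
    have := Psi_qle pq; rewrite PhiK // => /notc; apply: contra_not.
    by rewrite IHc ?PsiK //; apply: Psi_cond.
  + by rewrite IHc; [apply: notc (Phi_qle pq) | apply: qle_cond pq].
- apply: dense_below_Phi => // r Hr.
  by split=> [[n fn]|[n fn]]; exists n; apply/(IHf n r Hr).
Qed.

Lemma forced_out_bcode_map c : forced_out c -> forced_out (bcode_map c).
Proof.
move=> outc p Hp; rewrite -(PsiK Hp).
by apply/(forces_bcode_map (BCompl c)); [apply: Psi_cond | apply/outc/Psi_cond].
Qed.

Lemma bset_bcode_map c y a : (forall i, y (sigma i) = h i (a i)) ->
  bset (bcode_map c) y <-> bset c a.
Proof.
move=> ya; elim: c => [i b|c IHc|f IHf] /=.
- by rewrite ya; split=> [/h_inj|->].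
- by rewrite IHc.
- by split=> [[n]|[n]]; exists n; apply/IHf.
Qed.

Lemma in_ideal_bcode_map A : in_ideal A ->
  in_ideal (fun y => exists a, A a /\ forall i, y (sigma i) = h i (a i)).
Proof.
case=> l [forced cover]; exists (map bcode_map l); split.
- by move=> c /in_map_iff [c0 [<- /forced]]; apply: forced_out_bcode_map.
- move=> y [a [/cover [c [lc ac]] ya]]; exists (bcode_map c).
  by split; [apply: in_map | apply/bset_bcode_map].
Qed.

End Symmetry.
End Forcing.

Section CreatureSets.
Variables (X : zmodType) (D : Type).
Implicit Types (S : cset X D) (F : creature X D -> creature X D).

Definition cimage F S : cset X D := fun s' => exists s, S s /\ s' = F s.

Definition cfam (A : {fset nat}) (f : nat -> creature X D) : cset X D :=
  fun s => exists j, j \in A /\ s = f j.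

Lemma cfinite_cfam A f : cfinite (cfam A f).
Proof.
exists (map f (enum_fset A)) => s; split=> [[j [Aj ->]]|/in_map_iff [j [<- Aj]]].
- exact/in_map/In_mem.
- by exists j; split=> //; apply/In_mem.
Qed.

Lemma cimage_cfam F A f : cimage F (cfam A f) = cfam A (fun j => F (f j)).
Proof.
apply: functional_extensionality => s; apply: propositional_extensionality.
by split=> [[_ [[j [Aj ->]] ->]]|[j [Aj ->]]]; [exists j | exists (f j); split; [exists j|]].
Qed.

Lemma eq_in_cimage F G S : (forall s, S s -> F s = G s) -> cimage F S = cimage G S.
Proof.
move=> FG; apply: functional_extensionality => s; apply: propositional_extensionality.
by split=> [[s0 [Ss0 ->]]|[s0 [Ss0 ->]]]; exists s0; rewrite FG.
Qed.

End CreatureSets.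

Section TripleFacts.
Variables (X : zmodType) (D : Type) (K : cset X D) (Sig : cset X D -> cset X D)
  (SigB : creature X D -> cset X D -> Prop).
Hypothesis triple : semi_creating_triple K Sig SigB.

Lemma sval_full t v : K t -> csval t v -> full_on (cdom t) v.
Proof. by case: triple => creatures _ /creatures [_ [_ [full _]]] /full. Qed.

Lemma Sig_dom S t : cfinite S -> csub S K -> Sig S t ->
  forall i, i \in cdom t <-> exists s, S s /\ i \in cdom s.
Proof. by case: triple => _ [[_ [_ [_ [_ dom]]]] _] finS SK /(dom S finS SK) []. Qed.

Lemma SigB_dom S t : K t -> SigB t S ->
  forall i, i \in cdom t <-> exists s, S s /\ i \in cdom s.
Proof. by case: triple => _ [_ [_ [_ [_ [_ dom]]]]] Kt /(dom t S Kt) []. Qed.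

Lemma Sig_nonempty S t : Sig S t -> exists s, S s.
Proof.
move=> SigSt; apply: NNPP => noS.
have S0 : S = @cempty X D.
  apply: functional_extensionality => s; apply: propositional_extensionality.
  by split=> // Ss; apply: noS; exists s.
by case: triple => _ [[_ [_ [_ [Sig0 _]]]] _]; apply: (Sig0 t); rewrite -S0.
Qed.

End TripleFacts.

Section PartialFunctions.
Variable X : zmodType.
Implicit Types (v w : pfun X) (g : nat -> nat) (h : nat -> X -> X).

Definition pfun_map g h v : pfun X := fun j => omap (h (g j)) (v (g j)).

Lemma pfun_map_None g h v j : pfun_map g h v j <> None <-> v (g j) <> None.
Proof. by rewrite /pfun_map; case: (v (g j)). Qed.

Lemma full_on_None (A : {fset nat}) v i : full_on A v -> i \notin A -> v i = None.
Proof. by move=> vA /negP iA; case vi: (v i) => //; case: iA; apply/vA; rewrite vi. Qed.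

Lemma restr_pfun_map g h v (A B : {fset nat}) : (forall j, j \in B <-> g j \in A) ->
  restr (pfun_map g h v) B = pfun_map g h (restr v A).
Proof.
move=> BA; apply: functional_extensionality => j; rewrite /restr /pfun_map.
by case: ifP => [/BA->|jB] //; case: ifP => // /BA; rewrite jB.
Qed.

Lemma pfun_mapK sigma g h hinv :
  cancel sigma g -> (forall i, cancel (h i) (hinv (sigma i))) ->
  cancel (pfun_map g h) (pfun_map sigma hinv).
Proof.
move=> sigmaK hK v; apply: functional_extensionality => j.
by rewrite /pfun_map sigmaK omapK.
Qed.

Lemma restr_restr v (A B : {fset nat}) : (forall i, i \in B -> i \in A) ->
  restr (restr v A) B = restr v B.
Proof.
move=> BA; apply: functional_extensionality => i; rewrite /restr.
by case: ifP => // /BA ->.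
Qed.

Lemma padd_restr (x : nat -> X) (A : {fset nat}) w : full_on A w ->
  padd w (restr (fun i => Some (x i)) A) = pfun_map id (fun i a => a + x i)%R w.
Proof.
move=> wA; apply: functional_extensionality => i; rewrite /padd /restr /pfun_map /=.
case: ifP => iA; first by case: (w i).
by rewrite (full_on_None wA) ?iA.
Qed.

End PartialFunctions.

Section DirectSymmetry.
Variables (X : zmodType) (D : Type) (K : cset X D) (Sig : cset X D -> cset X D)
  (SigB : creature X D -> cset X D -> Prop).

Definition transported (g : nat -> nat) (h : nat -> X -> X) (t s : creature X D) : Prop :=
  (forall j, j \in cdom s <-> g j \in cdom t) /\ cnor s = cnor t /\
  (forall u, csval s u <-> exists w, csval t w /\ u = pfun_map g h w).

(* The common content of direct [+]-invariance ([g = id], [h i = +%R^~ (x i)])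
   and of direct permutation-invariance ([g = pi^-1], [h i = id]). *)
Definition direct_symmetry g h (F : creature X D -> creature X D) : Prop :=
  (forall t, K t -> K (F t) /\ transported g h t (F t)) /\
  (forall t s, K t -> K s -> transported g h t s -> s = F t) /\
  (forall S t, cfinite S -> csub S K -> Sig S t -> Sig (cimage F S) (F t)) /\
  (forall t S, K t -> SigB t S -> SigB (F t) (cimage F S)).

Section ConditionMap.
Variables (g : nat -> nat) (h : nat -> X -> X) (F : creature X D -> creature X D).
Hypothesis g_bij : bijective g.
Hypothesis symF : direct_symmetry g h F.

Let F_K t : K t -> K (F t).
Proof. by case: symF => /(_ t) + _ Kt => /(_ Kt) []. Qed.

Let F_transported t : K t -> transported g h t (F t).
Proof. by case: symF => /(_ t) + _ Kt => /(_ Kt) []. Qed.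

Let F_dom t j : K t -> j \in cdom (F t) <-> g j \in cdom t.
Proof. by case/F_transported. Qed.

Let F_nor t : K t -> cnor (F t) = cnor t.
Proof. by case/F_transported => _ []. Qed.

Let F_Sig S t : cfinite S -> csub S K -> Sig S t -> Sig (cimage F S) (F t).
Proof. by case: symF => _ [_ [+ _]]; apply. Qed.

Let F_SigB t S : K t -> SigB t S -> SigB (F t) (cimage F S).
Proof. by case: symF => _ [_ [_ +]]; apply. Qed.

Definition cond_map (p : cond X D) : cond X D :=
  Cond (pfun_map g h (cw p)) (fun i => F (ct p i)).

Lemma cond_map_cond p : is_cond K p -> is_cond K (cond_map p).
Proof.
case: g_bij => ginv gK ginvK.
case=> [[A wA] [Kp [cover [wdisj [disj [nor grow]]]]]].
split; [|split; [|split; [|split; [|split; [|split]]]]] => /=.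
- exists (ginv @` A) => j; rewrite pfun_map_None wA; split.
  + by move=> Agj; apply/imfsetP; exists (g j); rewrite ?gK.
  + by case/imfsetP => i Ai ->; rewrite ginvK.
- by move=> i; apply: F_K.
- move=> j; rewrite pfun_map_None.
  by case: (cover (g j)) => [|[i]]; [left | right; exists i; rewrite F_dom].
- by move=> i j; rewrite pfun_map_None F_dom //; apply: wdisj.
- by move=> i i' j; rewrite !F_dom //; apply: disj.
- by move=> i; rewrite F_nor.
- move=> M; have [N grown] := grow M.
  by exists N => i Ni r; rewrite F_nor //; apply: grown.
Qed.

Lemma cond_map_decide p q :
  is_cond K p -> step_decide p q -> step_decide (cond_map p) (cond_map q).
Proof.
move=> [_ [Kp _]] [A [wq [ext [sval [f [f_mono [f_cover ctq]]]]]]].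
have domF i j : j \in cdom (F (ct p i)) <-> g j \in cdom (ct p i) := F_dom j (Kp i).
exists A; split; [|split; [|split]] => /=.
- move=> j; rewrite !pfun_map_None wq.
  split; case=> [wpj|[i [Ai ij]]];
    [by left | by right; exists i; rewrite domF | by left | by right; exists i; rewrite -domF].
- move=> j a; rewrite /pfun_map; case wpj: (cw p (g j)) => [b|] //= [<-].
  by rewrite (ext _ _ wpj).
- move=> i Ai; rewrite (restr_pfun_map _ _ (domF i)).
  have [_ [_ ->]] := F_transported (Kp i).
  by exists (restr (cw q) (cdom (ct p i))); split; [apply: sval|].
- by exists f; do 2 split=> //; move=> k /=; rewrite ctq.
Qed.

Lemma cond_map_sigma p q :
  is_cond K p -> step_sigma Sig p q -> step_sigma Sig (cond_map p) (cond_map q).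
Proof.
move=> [_ [Kp _]] [wq [A [disj [cover sig]]]]; split; first by rewrite /= wq.
exists A; split=> //; split=> // i.
change (Sig (cfam (A i) (fun j => F (ct p j))) (F (ct q i))).
rewrite -cimage_cfam; apply: F_Sig (sig i).
- exact: cfinite_cfam.
- by move=> s [j [_ ->]].
Qed.

Lemma cond_map_sigmaB p q :
  is_cond K p -> step_sigmaB SigB p q -> step_sigmaB SigB (cond_map p) (cond_map q).
Proof.
move=> [_ [Kp _]] [wq [B [disj [cover [ne sigB]]]]]; split; first by rewrite /= wq.
exists B; split=> //; split=> //; split=> // i.
change (SigB (F (ct p i)) (cfam (B i) (fun j => F (ct q j)))).
by rewrite -cimage_cfam; apply: F_SigB (Kp i) (sigB i).
Qed.

Lemma cond_map_qstep p q :
  qstep K Sig SigB p q -> qstep K Sig SigB (cond_map p) (cond_map q).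
Proof.
case=> Hp [Hq step]; split; [exact: cond_map_cond | split; [exact: cond_map_cond |]].
case: step => [dec|[sig|sigB]].
- by left; apply: cond_map_decide.
- by right; left; apply: cond_map_sigma.
- by right; right; apply: cond_map_sigmaB.
Qed.

Lemma cond_map_qle p q : qle K Sig SigB p q -> qle K Sig SigB (cond_map p) (cond_map q).
Proof. by apply: qle_homo; [apply: cond_map_cond | apply: cond_map_qstep]. Qed.

Lemma cw_cond_map sigma q i a : cancel sigma g -> injective (h i) ->
  cw (cond_map q) (sigma i) = Some (h i a) <-> cw q i = Some a.
Proof.
move=> sigmaK h_inj; rewrite /= /pfun_map sigmaK.
by case: (cw q i) => [b|] /=; split=> // [[/h_inj->]|[->]].
Qed.

End ConditionMap.

Lemma direct_symmetryK sigma g h hinv F G :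
    direct_symmetry g h F -> direct_symmetry sigma hinv G ->
    cancel sigma g -> (forall i, cancel (h i) (hinv (sigma i))) ->
  forall t, K t -> G (F t) = t.
Proof.
move=> [symF _] [_ [uniqG _]] sigmaK hK t Kt.
have [KFt [domF [norF svalF]]] := symF t Kt.
symmetry; apply: uniqG => //; split; [|split] => //.
- by move=> j; rewrite domF sigmaK.
- move=> u; split=> [tu|[w [/svalF [w0 [tw0 ->]] ->]]].
  + by exists (pfun_map g h u); split; [apply/svalF; exists u | rewrite pfun_mapK].
  + by rewrite pfun_mapK.
Qed.

Lemma cond_mapK sigma g h hinv F G :
    direct_symmetry g h F -> direct_symmetry sigma hinv G ->
    cancel sigma g -> (forall i, cancel (h i) (hinv (sigma i))) ->
  forall p, is_cond K p -> cond_map sigma hinv G (cond_map g h F p) = p.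
Proof.
move=> symF symG sigmaK hK [w c] [_ [Kc _]].
rewrite /cond_map /= pfun_mapK //; congr Cond; apply: functional_extensionality => i.
exact: direct_symmetryK symF symG sigmaK hK _ (Kc i).
Qed.

Lemma in_ideal_direct_symmetry sigma g h hinv F G :
    cancel sigma g -> cancel g sigma ->
    (forall i, cancel (h i) (hinv (sigma i))) -> (forall j, cancel (hinv j) (h (g j))) ->
    direct_symmetry g h F -> direct_symmetry sigma hinv G ->
  forall A, in_ideal K Sig SigB A ->
  in_ideal K Sig SigB (fun y => exists a, A a /\ forall i, y (sigma i) = h i (a i)).
Proof.
move=> sigmaK gK hK hinvK symF symG A.
have g_bij : bijective g by exists sigma.
have sigma_bij : bijective sigma by exists g.
apply: (in_ideal_bcode_map (Phi := cond_map g h F) (Psi := cond_map sigma hinv G)).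
- exact: cond_map_qle.
- exact: cond_map_qle.
- exact: cond_mapK.
- exact: cond_mapK.
- by move=> q i a; apply: cw_cond_map => //; apply: can_inj (hK i).
- by move=> i; apply: can_inj (hK i).
Qed.

End DirectSymmetry.

Section Translation.
Variables (X : zmodType) (D : Type) (K : cset X D) (Sig : cset X D -> cset X D)
  (SigB : creature X D -> cset X D -> Prop).
Hypothesis triple : semi_creating_triple K Sig SigB.
Variable plus : creature X D -> pfun X -> creature X D.
Hypothesis plusP : forall t v, K t -> full_on (cdom t) v ->
  K (plus t v) /\ cdom (plus t v) = cdom t /\ cnor (plus t v) = cnor t /\
  (forall u, csval (plus t v) u <-> exists w, csval t w /\ u = padd w v) /\
  (forall s, K s -> cdom s = cdom t -> cnor s = cnor t ->
     (forall u, csval s u <-> exists w, csval t w /\ u = padd w v) -> s = plus t v).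
Hypothesis SigB_plus : forall t v, K t -> full_on (cdom t) v -> forall S',
  SigB (plus t v) S' <->
  exists S, SigB t S /\ S' = (fun s' => exists s, S s /\ s' = plus s (restr v (cdom s))).
Hypothesis Sig_plus : forall S v, cfinite S -> csub S K -> (exists s, S s) ->
  (forall i, v i <> None <-> exists s, S s /\ i \in cdom s) ->
  forall t', Sig (fun s' => exists s, S s /\ s' = plus s (restr v (cdom s))) t' <->
             exists s, Sig S s /\ t' = plus s v.

Variable x : nat -> X.

Let xs : pfun X := fun i => Some (x i).

Definition translate (t : creature X D) : creature X D := plus t (restr xs (cdom t)).

Lemma full_on_restr (A : {fset nat}) : full_on A (restr xs A).
Proof. by move=> i; rewrite /restr; case: (i \in A). Qed.

Lemma sval_translate t u : K t ->
  (exists w, csval t w /\ u = padd w (restr xs (cdom t))) <->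
  (exists w, csval t w /\ u = pfun_map id (fun i a => a + x i)%R w).
Proof.
move=> Kt; split=> -[w [tw ->]]; exists w; split=> //;
  by rewrite padd_restr //; exact: (sval_full triple Kt tw).
Qed.

Lemma translate_sub (t s : creature X D) : (forall i, i \in cdom s -> i \in cdom t) ->
  translate s = plus s (restr (restr xs (cdom t)) (cdom s)).
Proof. by move=> st; rewrite restr_restr. Qed.

Lemma translate_symmetry :
  direct_symmetry K Sig SigB id (fun i a => a + x i)%R translate.
Proof.
split; [|split; [|split]].
- move=> t Kt; have [KTt [domT [norT [svalT _]]]] := plusP Kt (full_on_restr (cdom t)).
  split=> //; split; first by move=> j; rewrite domT.
  by split=> // u; rewrite svalT sval_translate.
- move=> t s Kt Ks [dom_s [nor_s sval_s]].
  apply: (plusP Kt (full_on_restr (cdom t))).2.2.2.2 => //.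
  + by apply/fsetP => j; apply/idP/idP => /dom_s.
  + by move=> u; rewrite sval_s sval_translate.
- move=> S t finS SK SigSt; have dom_t := Sig_dom triple finS SK SigSt.
  rewrite (eq_in_cimage (G := fun s => plus s (restr (restr xs (cdom t)) (cdom s)))).
  + apply/(Sig_plus finS SK (Sig_nonempty triple SigSt)); last by exists t.
    by move=> j; rewrite -dom_t /restr; case: (j \in cdom t).
  + by move=> s Ss; apply: translate_sub => j js; apply/dom_t; exists s.
- move=> t S Kt SigBtS; have dom_t := SigB_dom triple Kt SigBtS.
  apply/SigB_plus => //; first exact: full_on_restr.
  exists S; split=> //; apply: eq_in_cimage => s Ss.
  by apply: translate_sub => j js; apply/dom_t; exists s.
Qed.

End Translation.

Lemma exists_preimage (pi g : nat -> nat) (A : {fset nat}) j :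
  cancel pi g -> cancel g pi -> (exists i, i \in A /\ pi i = j) <-> g j \in A.
Proof.
move=> piK gK; split=> [[i [Ai <-]]|Agj]; first by rewrite piK.
by exists (g j); rewrite gK.
Qed.

Lemma pcomp_inv_pfun_map (X : zmodType) (pi g : nat -> nat) (A : {fset nat})
    (w u : pfun X) :
  cancel pi g -> cancel g pi -> full_on A w ->
  pcomp_inv pi A w u <-> u = pfun_map g (fun _ => id) w.
Proof.
move=> piK gK wA; rewrite /pfun_map; split.
- case=> [wu u_dom]; apply: functional_extensionality => j; rewrite omap_id.
  case Agj: (g j \in A); first by rewrite -(wu _ Agj) gK.
  rewrite (full_on_None wA) ?Agj //; case uj: (u j) => [a|] //.
  have [|i [Ai ij]] := u_dom j; first by rewrite uj.
  by move: Agj; rewrite -ij piK Ai.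
- move->; split=> [i Ai|j]; first by rewrite piK omap_id.
  by rewrite omap_id => /wA Agj; exists (g j); rewrite gK.
Qed.

Section Permutation.
Variables (X : zmodType) (D : Type) (K : cset X D) (Sig : cset X D -> cset X D)
  (SigB : creature X D -> cset X D -> Prop).
Hypothesis triple : semi_creating_triple K Sig SigB.
Variable act : (nat -> nat) -> creature X D -> creature X D.
Hypothesis actP : forall t (Xs : nat -> Prop) (pi : nat -> nat), K t ->
  (forall i, i \in cdom t -> Xs i) ->
  (forall i j, Xs i -> Xs j -> pi i = pi j -> i = j) ->
  K (act pi t) /\
  (forall j, j \in cdom (act pi t) <-> exists i, i \in cdom t /\ pi i = j) /\
  cnor (act pi t) = cnor t /\
  (forall u, csval (act pi t) u <-> exists w, csval t w /\ pcomp_inv pi (cdom t) w u) /\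
  (forall s, K s ->
     (forall j, j \in cdom s <-> exists i, i \in cdom t /\ pi i = j) ->
     cnor s = cnor t ->
     (forall u, csval s u <-> exists w, csval t w /\ pcomp_inv pi (cdom t) w u) ->
     s = act pi t).
Hypothesis Sig_act : forall pi : nat -> nat, injective pi ->
  (forall t, K t -> forall S',
     SigB (act pi t) S' <->
     exists S, SigB t S /\ S' = (fun s' => exists s, S s /\ s' = act pi s)) /\
  (forall S, cfinite S -> csub S K -> forall t',
     Sig (fun s' => exists s, S s /\ s' = act pi s) t' <->
     exists s, Sig S s /\ t' = act pi s).

Variables (pi g : nat -> nat).
Hypotheses (piK : cancel pi g) (gK : cancel g pi).

Let pi_inj : injective pi := can_inj piK.

Lemma sval_act t u : K t ->
  (exists w, csval t w /\ pcomp_inv pi (cdom t) w u) <->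
  (exists w, csval t w /\ u = pfun_map g (fun _ => id) w).
Proof.
move=> Kt; split=> -[w [tw wu]]; exists w; split=> //;
  by move: wu; rewrite (pcomp_inv_pfun_map u piK gK (sval_full triple Kt tw)).
Qed.

Lemma act_transported t : K t -> K (act pi t) /\ transported g (fun _ => id) t (act pi t).
Proof.
move=> Kt; have [Kat [domA [norA [svalA _]]]] :=
  actP (Xs := fun _ => True) Kt (fun _ _ => I) (fun i j _ _ => @pi_inj i j).
split=> //; split; first by move=> j; rewrite domA (exists_preimage _ _ piK gK).
by split=> // u; rewrite svalA sval_act.
Qed.

Lemma act_unique t s :
  K t -> K s -> transported g (fun _ => id) t s -> s = act pi t.
Proof.
move=> Kt Ks [dom_s [nor_s sval_s]].
have [_ [_ [_ [_ uniq]]]] :=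
  actP (Xs := fun _ => True) Kt (fun _ _ => I) (fun i j _ _ => @pi_inj i j).
apply: uniq => //.
- by move=> j; rewrite dom_s (exists_preimage _ _ piK gK).
- by move=> u; rewrite sval_s sval_act.
Qed.

Lemma act_symmetry : direct_symmetry K Sig SigB g (fun _ => id) (act pi).
Proof.
split; [exact: act_transported | split; [exact: act_unique | split]].
- by move=> S t finS SK SigSt; apply/((Sig_act pi_inj).2 S finS SK); exists t.
- by move=> t S Kt SigBtS; apply/((Sig_act pi_inj).1 t Kt); exists S.
Qed.

End Permutation.

Theorem proposition1p9 (X : countZmodType) (D : Type)
    (K : cset X D) (Sig : cset X D -> cset X D) (SigB : creature X D -> cset X D -> Prop) :
  (exists x : X, x != 0%R) ->
  semi_creating_triple K Sig SigB ->
  (plus_invariant K Sig SigB ->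
     forall (A : (nat -> X) -> Prop) (x : nat -> X),
       in_ideal K Sig SigB A ->
       in_ideal K Sig SigB (fun y => exists a, A a /\ y = (fun i => (a i + x i)%R))) /\
  (perm_invariant K Sig SigB ->
     forall (pi : nat -> nat), bijective pi ->
     forall (A : (nat -> X) -> Prop),
       in_ideal K Sig SigB A ->
       in_ideal K Sig SigB (fun x => A (fun i => x (pi i)))).
Proof.
move=> _ triple; split.
- case=> plus [plusP [SigB_plus Sig_plus]] A x idealA.
  have symx := translate_symmetry triple plusP SigB_plus Sig_plus x.
  have symNx := translate_symmetry triple plusP SigB_plus Sig_plus (fun i => - x i)%R.
  apply: in_ideal_sub (in_ideal_direct_symmetry (fun _ => erefl) (fun _ => erefl)
    (fun i => addrK (x i)) (fun i => subrK (x i)) symx symNx idealA).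
  by move=> _ [a [Aa ->]]; exists a.
- case=> act [actP Sig_act] pi [g piK gK] A idealA.
  have sympi := act_symmetry triple actP Sig_act piK gK.
  have symg := act_symmetry triple actP Sig_act gK piK.
  apply: in_ideal_sub (in_ideal_direct_symmetry piK gK
    (fun _ _ => erefl) (fun _ _ => erefl) sympi symg idealA).
  by move=> y Ay; exists (fun i => y (pi i)).
Qed.
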